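(* Let $c\ge 0$, $m\ge 2$, and let $x=((x^1,n_1),\dots,(x^q,n_q))$ be a non-convergent Nash equilibrium of the best-worst rule $s=(c,m)$. Then $n_i\le 2$ for every $i\in[q]$, and $n_1=n_q=2$. In particular, for $m=3$ no non-convergent Nash equilibrium exists.
   Context: Setting: voters' ideal points are distributed uniformly (unit mass, Lebesgue measure) on $[0,1]$. There are $m$ candidates; a profile is $x=(x_1,\dots,x_m)\in[0,1]^m$. A voter with ideal point $y$ ranks candidates by distance $|x_i-y|$ (closer is better); ties are broken by a fair lottery (uniformly random strict order among tied candidates). Under the best-worst rule $s=(c,m)$ ($c\ge0$), a candidate receives $1$ point from each voter ranking her first, $-c$ from each voter ranking her last ($m$-th), and $0$ otherwise; $v_i(x)$ is candidate $i$'s expected total points. A (pure-strategy Nash) equilibrium is a profile $x^*$ with $v_i(x^* )\ge v_i(t,x^*_{-i})$ for all $i$ and $t\in[0,1]$ ($(t,x_{-i})$ is $x$ with $x_i$ replaced by $t$); it is non-convergent if at least two platforms are distinct. $[n]=\{1,\dots,n\}$. A profile determines its distinct occupied positions $x^1<\dots<x^q$, with $n_j$ the number of candidates at $x^j$; we write $x=((x^1,n_1),\dots,(x^q,n_q))$. *)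

From Stdlib Require Import Reals Lra List.
Import ListNotations.
Open Scope R_scope.

Definition Rleb (a b : R) : bool := if Rle_dec a b then true else false.
Definition Reqb (a b : R) : bool := if Req_EM_T a b then true else false.

(* A profile of m candidates: x : nat -> R, candidates are indices 0..m-1. *)
Definition dist (x : nat -> R) (j : nat) (y : R) : R := Rabs (x j - y).

(* voter y ranks candidate i (among ties) first / last with positive probability *)
Definition closest (m : nat) (x : nat -> R) (i : nat) (y : R) : bool :=
  forallb (fun j => Rleb (dist x i y) (dist x j y)) (seq 0 m).
Definition farthest (m : nat) (x : nat -> R) (i : nat) (y : R) : bool :=
  forallb (fun j => Rleb (dist x j y) (dist x i y)) (seq 0 m).

Definition ntied (m : nat) (x : nat -> R) (i : nat) (y : R) : nat :=
  length (filter (fun j => Reqb (dist x j y) (dist x i y)) (seq 0 m)).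

(* Expected points candidate i receives from voter y under the best-worst
   rule s = (c,m), ties broken by a fair lottery (uniform random strict order
   among tied candidates): P(first) = 1/#tied if i is among the closest,
   P(last) = 1/#tied if i is among the farthest. *)
Definition score (c : R) (m : nat) (x : nat -> R) (i : nat) (y : R) : R :=
  (if closest m x i y then 1 / INR (ntied m x i y) else 0)
  - c * (if farthest m x i y then 1 / INR (ntied m x i y) else 0).

(* v_i(x) = v : expected total points, integrating over voters uniform on [0,1] *)
Definition value (c : R) (m : nat) (x : nat -> R) (i : nat) (v : R) : Prop :=
  exists pr : Riemann_integrable (score c m x i) 0 1, RiemannInt pr = v.

Definition upd (x : nat -> R) (i : nat) (t : R) : nat -> R :=
  fun j => if Nat.eq_dec j i then t else x j.

Definition profile (m : nat) (x : nat -> R) : Prop :=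
  forall j, (j < m)%nat -> 0 <= x j <= 1.

Definition nash (c : R) (m : nat) (x : nat -> R) : Prop :=
  profile m x /\
  forall i, (i < m)%nat -> forall t, 0 <= t <= 1 ->
    forall v v', value c m x i v -> value c m (upd x i t) i v' -> v' <= v.

Definition nonconvergent (m : nat) (x : nat -> R) : Prop :=
  exists j k, (j < m)%nat /\ (k < m)%nat /\ x j <> x k.

Definition mult (m : nat) (x : nat -> R) (j : nat) : nat :=
  length (filter (fun k => Reqb (x k) (x j)) (seq 0 m)).

(* Off the finitely many midpoints (x_j + x_k)/2, a voter gives candidate i exactly
   (first - c * last) / n points, where n is the number of candidates sharing i's
   position; payoffs are therefore integrals of step functions, compared pointwise
   off a finite set.

   A candidate alone at the leftmost position gains by moving halfway towards her
   nearest neighbour: she keeps all her first places, wins those between the old and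
   the new midpoint, and can only lose last places.

   If n >= 3 candidates share a position p and someone stands to their right, a step
   of length d to the right (and, when p > 0, also one to the left) makes the mover
   the sole first choice of the voters the n candidates shared on that side, up to an
   error of order (1 + c) d. Hence n v <= 2 v + O(d), while the step to the right
   already secures v >= G/2 - d/2, G being the distance from p to the nearest other
   position; this is absurd for small d.

   The reflection y |-> 1 - y carries both facts to the right end, and two extreme
   positions with two candidates each need m >= 4. *)

From Pilot Require Import Defs.
From Stdlib Require Import Reals List Lra Lia Bool Classical FunctionalExtensionality.
From Coquelicot Require Import Coquelicot.
(* re-import [Defs] so that its [dist] shadows the metric-space [dist] of Reals *)
Import Defs ListNotations.
Open Scope R_scope.

Definition b2r (b : bool) : R := if b then 1 else 0.

Lemma b2r_bounds b : 0 <= b2r b <= 1.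
Proof. destruct b; simpl; lra. Qed.

Lemma b2r_le (b1 b2 : bool) : (b1 = true -> b2 = true) -> b2r b1 <= b2r b2.
Proof. destruct b1, b2; simpl; intuition (try lra; discriminate). Qed.

Lemma Rleb_true a b : Rleb a b = true <-> a <= b.
Proof. unfold Rleb. destruct (Rle_dec a b); intuition discriminate. Qed.

Lemma Reqb_true a b : Reqb a b = true <-> a = b.
Proof. unfold Reqb. destruct (Req_EM_T a b); intuition discriminate. Qed.

Lemma Rleb_iff a b a' b' : (a <= b <-> a' <= b') -> Rleb a b = Rleb a' b'.
Proof. intros H. apply eq_true_iff_eq. rewrite !Rleb_true. exact H. Qed.

Lemma Reqb_iff a b a' b' : (a = b <-> a' = b') -> Reqb a b = Reqb a' b'.
Proof. intros H. apply eq_true_iff_eq. rewrite !Reqb_true. exact H. Qed.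

Lemma not_in_app_iff {A : Type} (a : A) l1 l2 : ~ In a (l1 ++ l2) <-> ~ In a l1 /\ ~ In a l2.
Proof. rewrite in_app_iff. tauto. Qed.

Lemma forallb_ext_in {A : Type} (f g : A -> bool) l :
  (forall a, In a l -> f a = g a) -> forallb f l = forallb g l.
Proof. induction l as [|a l IH]; simpl; intros H; auto. rewrite H, IH; auto. Qed.

Lemma upd_same x i t : upd x i t i = t.
Proof. unfold upd. destruct (Nat.eq_dec i i); congruence. Qed.

Lemma upd_other x i t k : k <> i -> upd x i t k = x k.
Proof. intros. unfold upd. destruct (Nat.eq_dec k i); congruence. Qed.

Lemma closest_iff m x i y :
  closest m x i y = true <-> forall k, (k < m)%nat -> dist x i y <= dist x k y.
Proof.
  unfold closest. rewrite forallb_forall. split; intros H k Hk.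
  - apply Rleb_true, H, in_seq. lia.
  - apply in_seq in Hk. apply Rleb_true, H. lia.
Qed.

Lemma farthest_iff m x i y :
  farthest m x i y = true <-> forall k, (k < m)%nat -> dist x k y <= dist x i y.
Proof.
  unfold farthest. rewrite forallb_forall. split; intros H k Hk.
  - apply Rleb_true, H, in_seq. lia.
  - apply in_seq in Hk. apply Rleb_true, H. lia.
Qed.

Lemma closest_upd m x i t y : (i < m)%nat ->
  closest m (upd x i t) i y = true <->
  forall k, (k < m)%nat -> k <> i -> Rabs (t - y) <= Rabs (x k - y).
Proof.
  intros Hi. rewrite closest_iff. unfold dist. rewrite upd_same. split; intros H k Hk.
  - intros Hki. rewrite <- (upd_other x i t k Hki). auto.
  - destruct (Nat.eq_dec k i) as [->|Hki]; [rewrite upd_same; lra|].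
    rewrite upd_other; auto.
Qed.

Lemma farthest_upd m x i t y : (i < m)%nat ->
  farthest m (upd x i t) i y = true <->
  forall k, (k < m)%nat -> k <> i -> Rabs (x k - y) <= Rabs (t - y).
Proof.
  intros Hi. rewrite farthest_iff. unfold dist. rewrite upd_same. split; intros H k Hk.
  - intros Hki. rewrite <- (upd_other x i t k Hki). auto.
  - destruct (Nat.eq_dec k i) as [->|Hki]; [rewrite upd_same; lra|].
    rewrite upd_other; auto.
Qed.

Lemma closest_upd_closer m x i t y : (i < m)%nat ->
  closest m x i y = true -> Rabs (t - y) <= Rabs (x i - y) -> closest m (upd x i t) i y = true.
Proof.
  intros Hi Hcl Hty. apply closest_upd; auto. intros k Hk _.
  apply closest_iff with (k := k) in Hcl; auto. unfold dist in Hcl. lra.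
Qed.

Lemma farthest_between m x i j k y : (j < m)%nat -> (k < m)%nat ->
  x j < x i < x k -> farthest m x i y = false.
Proof.
  intros Hj Hk Hjik. destruct (farthest m x i y) eqn:E; auto.
  rewrite farthest_iff in E. pose proof (E j Hj). pose proof (E k Hk).
  unfold dist in *. split_Rabs; lra.
Qed.

Lemma mult_ge1 m x i : (i < m)%nat -> (1 <= mult m x i)%nat.
Proof.
  intros Hi. unfold mult.
  assert (Hin : In i (filter (fun k => Reqb (x k) (x i)) (seq 0 m))).
  { apply filter_In. split; [apply in_seq; lia | apply Reqb_true; auto]. }
  destruct (filter _ _); [destruct Hin | simpl; lia].
Qed.

Lemma mult_ge2 m x i k : (i < m)%nat -> (k < m)%nat -> k <> i -> x k = x i ->
  (2 <= mult m x i)%nat.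
Proof.
  intros Hi Hk Hki E. unfold mult. change 2%nat with (length [i; k]).
  apply NoDup_incl_length.
  - constructor; [simpl; intuition | constructor; [simpl; auto | constructor]].
  - intros z [<-|[<-|[]]]; apply filter_In;
      (split; [apply in_seq; lia | apply Reqb_true; auto]).
Qed.

Lemma mult_eq1 m x i : (i < m)%nat -> (forall k, (k < m)%nat -> k <> i -> x k <> x i) ->
  mult m x i = 1%nat.
Proof.
  intros Hi H. apply Nat.le_antisymm; [|apply mult_ge1; auto].
  unfold mult. change 1%nat with (length [i]). apply NoDup_incl_length.
  - apply NoDup_filter, seq_NoDup.
  - intros k Hk. apply filter_In in Hk as [Hk E]. apply in_seq in Hk. apply Reqb_true in E.
    destruct (Nat.eq_dec k i) as [->|Hki]; [left; auto | exfalso; apply (H k); auto; lia].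
Qed.

Lemma mult_ge2_other m x i : (i < m)%nat -> (2 <= mult m x i)%nat ->
  exists k, (k < m)%nat /\ k <> i /\ x k = x i.
Proof.
  intros Hi H. apply NNPP. intros Hno.
  rewrite mult_eq1 in H; [lia | auto |]. intros k Hk Hki E. apply Hno. eauto.
Qed.

Lemma mult_upd_alone m x i t : (i < m)%nat -> (forall k, (k < m)%nat -> k <> i -> x k <> t) ->
  mult m (upd x i t) i = 1%nat.
Proof.
  intros Hi H. apply mult_eq1; auto. intros k Hk Hki. rewrite upd_same, upd_other; auto.
Qed.

Lemma mult_add_le m x j k : x j <> x k -> (mult m x j + mult m x k <= m)%nat.
Proof.
  intros Hjk. unfold mult. rewrite <- length_app.
  transitivity (length (seq 0 m)); [|rewrite length_seq; lia]. apply NoDup_incl_length.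
  - apply NoDup_app; try apply NoDup_filter, seq_NoDup.
    intros a Ha Ha'. apply filter_In in Ha as [_ Ha]. apply filter_In in Ha' as [_ Ha'].
    apply Reqb_true in Ha, Ha'. congruence.
  - intros a Ha. apply in_app_iff in Ha as [Ha|Ha]; apply filter_In in Ha; tauto.
Qed.

Lemma argmin_ex m (f : nat -> R) : (0 < m)%nat ->
  exists b, (b < m)%nat /\ forall k, (k < m)%nat -> f b <= f k.
Proof.
  induction m as [|m IH]; intros Hm; [lia|].
  destruct (Nat.eq_dec m 0) as [->|Hm0].
  - exists 0%nat. split; [lia|]. intros k Hk. replace k with 0%nat by lia. lra.
  - destruct IH as [b [Hb H]]; [lia|].
    destruct (Rle_dec (f b) (f m)).
    + exists b. split; [lia|]. intros k Hk.
      destruct (Nat.eq_dec k m) as [->|]; [auto | apply H; lia].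
    + exists m. split; [lia|]. intros k Hk.
      destruct (Nat.eq_dec k m) as [->|]; [lra|]. specialize (H k ltac:(lia)). lra.
Qed.

Lemma argmax_ex m (f : nat -> R) : (0 < m)%nat ->
  exists b, (b < m)%nat /\ forall k, (k < m)%nat -> f k <= f b.
Proof.
  intros Hm. destruct (argmin_ex m (fun k => - f k) Hm) as [b [Hb H]].
  exists b. split; auto. intros k Hk. specialize (H k Hk). lra.
Qed.

Lemma nearest_above m x p k : (k < m)%nat -> p < x k ->
  exists b, (b < m)%nat /\ p < x b /\ forall j, (j < m)%nat -> p < x j -> x b <= x j.
Proof.
  intros Hk Hpk.
  (* candidates at or below [p] are pushed above [x k] *)
  set (f j := if Rlt_dec p (x j) then x j else x k + 1).
  destruct (argmin_ex m f ltac:(lia)) as [b [Hb H]].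
  assert (Hfk : f k = x k) by (unfold f; destruct Rlt_dec; lra).
  assert (Hpb : p < x b).
  { specialize (H k Hk). unfold f in H at 1. destruct Rlt_dec; lra. }
  exists b. split; [|split]; auto. intros j Hj Hpj. specialize (H j Hj).
  unfold f in H. do 2 destruct Rlt_dec; lra.
Qed.

Lemma gap_ex m x p : exists G, 0 < G /\
  forall k, (k < m)%nat -> x k <> p -> G <= Rabs (x k - p).
Proof.
  destruct (Nat.eq_dec m 0) as [->|Hm]; [exists 1; split; [lra | intros; lia]|].
  set (f j := if Req_EM_T (x j) p then 1 else Rabs (x j - p)).
  destruct (argmin_ex m f ltac:(lia)) as [b [Hb H]].
  exists (f b). split.
  - unfold f. destruct Req_EM_T; [lra|]. apply Rabs_pos_lt. lra.
  - intros k Hk Hkp. specialize (H k Hk). unfold f at 2 in H.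
    destruct Req_EM_T; [contradiction | auto].
Qed.

(** * Riemann integrals of piecewise constant functions *)

Lemma ex_RInt_piecewise_const (f : R -> R) (L : list R) : forall a b, a <= b ->
  (forall u v, a <= u -> u < v -> v <= b -> (forall y, u < y < v -> ~ In y L) ->
     forall y1 y2, u < y1 < v -> u < y2 < v -> f y1 = f y2) ->
  ex_RInt f a b.
Proof.
  induction L as [|p L IH]; intros a b Hab H.
  - destruct (Req_dec a b) as [->|Hne]; [apply ex_RInt_point|].
    apply (ex_RInt_ext (fun _ => f ((a + b) / 2))); [|apply ex_RInt_const].
    intros y Hy. rewrite Rmin_left, Rmax_right in Hy by lra.
    apply (H a b); try lra. intros z _ [].
  - assert (HL : forall a' b', a <= a' -> a' <= b' -> b' <= b -> (a' < p < b' -> False) ->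
              ex_RInt f a' b').
    { intros a' b' Ha' Hab' Hb' Hp. apply IH; auto. intros u v Hu Huv Hv Hn. apply H; try lra.
      intros y Hy [->|Hin]; [lra | exact (Hn y Hy Hin)]. }
    destruct (Rlt_dec a p); [destruct (Rlt_dec p b)|].
    + apply ex_RInt_Chasles with p; apply HL; lra.
    + apply HL; lra.
    + apply HL; lra.
Qed.

Lemma RInt_le_off_finite (f g : R -> R) (L : list R) : forall a b, a <= b ->
  ex_RInt f a b -> ex_RInt g a b ->
  (forall y, a < y < b -> ~ In y L -> f y <= g y) -> RInt f a b <= RInt g a b.
Proof.
  induction L as [|p L IH]; intros a b Hab Hf Hg H.
  - apply RInt_le; auto; intros y Hy; apply H; auto.
  - assert (HL : forall a' b', a <= a' -> a' <= b' -> b' <= b -> (a' < p < b' -> False) ->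
              ex_RInt f a' b' -> ex_RInt g a' b' -> RInt f a' b' <= RInt g a' b').
    { intros a' b' Ha' Hab' Hb' Hp Hf' Hg'. apply IH; auto. intros y Hy Hn. apply H; [lra|].
      intros [->|Hin]; [lra | auto]. }
    destruct (Rlt_dec a p); [destruct (Rlt_dec p b)|]; try (apply HL; auto; lra).
    assert (Hap : a <= p <= b) by lra.
    pose proof (@ex_RInt_Chasles_1 R_CompleteNormedModule f a p b Hap Hf).
    pose proof (@ex_RInt_Chasles_2 R_CompleteNormedModule f a p b Hap Hf).
    pose proof (@ex_RInt_Chasles_1 R_CompleteNormedModule g a p b Hap Hg).
    pose proof (@ex_RInt_Chasles_2 R_CompleteNormedModule g a p b Hap Hg).
    rewrite <- (RInt_Chasles f a p b), <- (RInt_Chasles g a p b) by auto.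
    apply Rplus_le_compat; apply HL; auto; lra.
Qed.

Lemma RInt_Rplus (f g : R -> R) a b : ex_RInt f a b -> ex_RInt g a b ->
  RInt (fun y => f y + g y) a b = RInt f a b + RInt g a b.
Proof. exact (RInt_plus f g a b). Qed.

Lemma RInt_Rmult (f : R -> R) a b k : ex_RInt f a b ->
  RInt (fun y => k * f y) a b = k * RInt f a b.
Proof. exact (RInt_scal f a b k). Qed.

Definition ind (a b y : R) : R := if Rle_dec a y then if Rle_dec y b then 1 else 0 else 0.

Lemma ind_bounds a b y : 0 <= ind a b y <= 1.
Proof. unfold ind. repeat destruct Rle_dec; lra. Qed.

Lemma ex_RInt_ind a b u w : u <= w -> ex_RInt (ind a b) u w.
Proof.
  intros H. apply (ex_RInt_piecewise_const _ [a; b]); auto.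
  intros u' v' _ _ _ Hn y1 y2 H1 H2.
  assert (a <= u' \/ v' <= a) by (destruct (Rlt_dec u' a), (Rlt_dec a v'); try lra;
    exfalso; apply (Hn a); simpl; auto; lra).
  assert (b <= u' \/ v' <= b) by (destruct (Rlt_dec u' b), (Rlt_dec b v'); try lra;
    exfalso; apply (Hn b); simpl; auto; lra).
  unfold ind. repeat destruct Rle_dec; lra.
Qed.

Lemma RInt_const_on (f : R -> R) a b k : a <= b -> (forall y, a < y < b -> f y = k) ->
  RInt f a b = k * (b - a).
Proof.
  intros H E. rewrite (RInt_ext f (fun _ => k)).
  - rewrite RInt_const. change (scal (b - a) k) with ((b - a) * k). apply Rmult_comm.
  - intros y Hy. rewrite Rmin_left, Rmax_right in Hy by lra. auto.
Qed.

Lemma RInt_ind a b : 0 <= a -> a <= b -> b <= 1 -> RInt (ind a b) 0 1 = b - a.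
Proof.
  intros H1 H2 H3.
  rewrite <- (RInt_Chasles _ 0 a 1), <- (RInt_Chasles _ a b 1) by (apply ex_RInt_ind; lra).
  unfold plus; simpl.
  rewrite (RInt_const_on _ 0 a 0), (RInt_const_on _ a b 1), (RInt_const_on _ b 1 0);
    try lra; intros y Hy; unfold ind; repeat destruct Rle_dec; lra.
Qed.

Lemma RInt_ind_le a b : a <= b -> RInt (ind a b) 0 1 <= b - a.
Proof.
  intros H.
  (* clip [a, b] to [0, 1] *)
  set (a' := Rmax 0 (Rmin a 1)). set (b' := Rmax a' (Rmin b 1)).
  assert (0 <= a' <= b' /\ b' <= 1 /\ b' - a' <= b - a)
    by (unfold b', a', Rmax, Rmin; repeat destruct Rle_dec; lra).
  rewrite (RInt_ext _ (ind a' b')), RInt_ind; try lra.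
  intros y Hy. rewrite Rmin_left, Rmax_right in Hy by lra.
  unfold ind, b', a', Rmax, Rmin; repeat destruct Rle_dec; lra.
Qed.

(** * Voters off the midpoints *)

Definition midpoints (m : nat) (x : nat -> R) : list R :=
  flat_map (fun j => map (fun k => (x j + x k) / 2) (seq 0 m)) (seq 0 m).

Lemma in_midpoints m x j k : (j < m)%nat -> (k < m)%nat -> In ((x j + x k) / 2) (midpoints m x).
Proof.
  intros Hj Hk. apply in_flat_map. exists j. split; [apply in_seq; lia|].
  apply (in_map (fun k => (x j + x k) / 2)). apply in_seq; lia.
Qed.

Lemma dist_compare_same_side a b y1 y2 :
  (a + b < 2 * y1 /\ a + b < 2 * y2) \/ (2 * y1 < a + b /\ 2 * y2 < a + b) ->
  Rleb (Rabs (a - y1)) (Rabs (b - y1)) = Rleb (Rabs (a - y2)) (Rabs (b - y2)) /\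
  Reqb (Rabs (a - y1)) (Rabs (b - y1)) = Reqb (Rabs (a - y2)) (Rabs (b - y2)).
Proof.
  intros H. split; [apply Rleb_iff | apply Reqb_iff]; split; intros; split_Rabs; lra.
Qed.

Lemma score_const_off_midpoints c m x i u v : (i < m)%nat ->
  (forall y, u < y < v -> ~ In y (midpoints m x)) ->
  forall y1 y2, u < y1 < v -> u < y2 < v -> score c m x i y1 = score c m x i y2.
Proof.
  intros Hi H y1 y2 H1 H2.
  assert (K : forall j k, (j < m)%nat -> (k < m)%nat ->
     Rleb (dist x j y1) (dist x k y1) = Rleb (dist x j y2) (dist x k y2) /\
     Reqb (dist x j y1) (dist x k y1) = Reqb (dist x j y2) (dist x k y2)).
  { intros j k Hj Hk. apply dist_compare_same_side.
    assert (~ (u < (x j + x k) / 2 < v)) by (intros Hm; apply (H _ Hm), in_midpoints; auto).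
    destruct (Rle_lt_dec v ((x j + x k) / 2)); [right | left]; lra. }
  assert (Ec : closest m x i y1 = closest m x i y2).
  { apply forallb_ext_in. intros k Hk. apply in_seq in Hk. apply K; lia. }
  assert (Ef : farthest m x i y1 = farthest m x i y2).
  { apply forallb_ext_in. intros k Hk. apply in_seq in Hk. apply K; lia. }
  assert (En : ntied m x i y1 = ntied m x i y2).
  { unfold ntied. f_equal. apply filter_ext_in. intros k Hk. apply in_seq in Hk. apply K; lia. }
  unfold score. rewrite Ec, Ef, En. reflexivity.
Qed.

Lemma ex_RInt_score c m x i a b : (i < m)%nat -> a <= b -> ex_RInt (score c m x i) a b.
Proof.
  intros Hi Hab. apply (ex_RInt_piecewise_const _ (midpoints m x)); auto.
  intros u v _ _ _ Hn. apply score_const_off_midpoints; auto.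
Qed.

Lemma ntied_off_midpoints m x i y : (i < m)%nat -> ~ In y (midpoints m x) ->
  ntied m x i y = mult m x i.
Proof.
  intros Hi Hy. unfold ntied, mult. f_equal. apply filter_ext_in. intros k Hk.
  apply in_seq in Hk. apply Reqb_iff. unfold dist.
  destruct (Req_dec (x k) (x i)) as [E|E]; [rewrite E; tauto|].
  split; intros H; [|contradiction]. exfalso. apply Hy.
  replace y with ((x k + x i) / 2) by (split_Rabs; lra). apply in_midpoints; lia.
Qed.

Lemma mult_score_off_midpoints c m x i y : (i < m)%nat -> ~ In y (midpoints m x) ->
  INR (mult m x i) * score c m x i y =
  b2r (closest m x i y) - c * b2r (farthest m x i y).
Proof.
  intros Hi Hy. unfold score. rewrite ntied_off_midpoints by auto.
  assert (0 < INR (mult m x i)) by (apply lt_0_INR; pose proof (mult_ge1 m x i Hi); lia).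
  unfold b2r. destruct closest, farthest; field; lra.
Qed.

Lemma score_alone c m x i y : (i < m)%nat -> ~ In y (midpoints m x) -> mult m x i = 1%nat ->
  score c m x i y = b2r (closest m x i y) - c * b2r (farthest m x i y).
Proof.
  intros Hi Hy E. rewrite <- mult_score_off_midpoints, E by auto. simpl. ring.
Qed.

Definition payoff (c : R) (m : nat) (x : nat -> R) (i : nat) : R := RInt (score c m x i) 0 1.

Definition no_profitable_deviation (c : R) (m : nat) (x : nat -> R) : Prop :=
  profile m x /\ forall i t, (i < m)%nat -> 0 <= t <= 1 ->
    payoff c m (upd x i t) i <= payoff c m x i.

Lemma value_payoff c m x i : (i < m)%nat -> value c m x i (payoff c m x i).
Proof.
  intros Hi. pose proof (ex_RInt_Reals_0 _ _ _ (ex_RInt_score c m x i 0 1 Hi ltac:(lra))) as pr.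
  exists pr. unfold payoff. rewrite (RInt_Reals _ _ _ pr). reflexivity.
Qed.

Lemma nash_no_profitable_deviation c m x : nash c m x -> no_profitable_deviation c m x.
Proof.
  intros [Hprof H]. split; auto. intros i t Hi Ht. apply (H i Hi t Ht); apply value_payoff; auto.
Qed.

(** * The mirror image [y |-> 1 - y] *)

Definition mirror (x : nat -> R) : nat -> R := fun k => 1 - x k.

Lemma dist_mirror x j y : dist (mirror x) j y = dist x j (1 - y).
Proof. unfold dist, mirror. rewrite <- Rabs_Ropp. f_equal. ring. Qed.

Lemma score_mirror c m x i y : score c m (mirror x) i y = score c m x i (1 - y).
Proof.
  assert (E : dist (mirror x) = fun j y => dist x j (1 - y)).
  { do 2 (apply functional_extensionality; intros). apply dist_mirror. }
  unfold score, closest, farthest, ntied. rewrite E. reflexivity.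
Qed.

Lemma upd_mirror x i t : upd (mirror x) i t = mirror (upd x i (1 - t)).
Proof.
  apply functional_extensionality. intros k. unfold upd, mirror.
  destruct (Nat.eq_dec k i); ring.
Qed.

Lemma RInt_reflect (f : R -> R) : ex_RInt f 0 1 -> RInt (fun y => f (1 - y)) 0 1 = RInt f 0 1.
Proof.
  intros Hf.
  assert (Hf' : ex_RInt f (-1 * 0 + 1) (-1 * 1 + 1)).
  { replace (-1 * 0 + 1) with 1 by ring. replace (-1 * 1 + 1) with 0 by ring.
    apply ex_RInt_swap; auto. }
  pose proof (RInt_comp_lin f (-1) 1 0 1 Hf') as E.
  replace (-1 * 0 + 1) with 1 in E by ring. replace (-1 * 1 + 1) with 0 in E by ring.
  rewrite <- (opp_RInt_swap f 0 1 Hf) in E.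
  change (RInt (fun y => -1 * f (-1 * y + 1)) 0 1 = - RInt f 0 1) in E.
  assert (Hg : ex_RInt (fun y => f (-1 * y + 1)) 0 1).
  { apply (ex_RInt_ext (fun y => -1 * (-1 * f (-1 * y + 1)))); [intros; simpl; ring|].
    exact (ex_RInt_scal _ 0 1 (-1) (ex_RInt_comp_lin f (-1) 1 0 1 Hf')). }
  rewrite (RInt_Rmult _ _ _ _ Hg) in E.
  rewrite (RInt_ext _ (fun y => f (-1 * y + 1))); [lra|].
  intros y _. f_equal. ring.
Qed.

Lemma payoff_mirror c m x i : (i < m)%nat -> payoff c m (mirror x) i = payoff c m x i.
Proof.
  intros Hi. unfold payoff. rewrite (RInt_ext _ (fun y => score c m x i (1 - y))).
  - apply RInt_reflect, ex_RInt_score; auto; lra.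
  - intros y _. apply score_mirror.
Qed.

Lemma no_profitable_deviation_mirror c m x :
  no_profitable_deviation c m x -> no_profitable_deviation c m (mirror x).
Proof.
  intros [Hprof H]. split.
  - intros k Hk. specialize (Hprof k Hk). unfold mirror. lra.
  - intros i t Hi Ht. rewrite upd_mirror, !payoff_mirror by auto. apply H; auto; lra.
Qed.

Lemma mult_mirror m x j : mult m (mirror x) j = mult m x j.
Proof.
  unfold mult. f_equal. apply filter_ext. intros k. apply Reqb_iff. unfold mirror. lra.
Qed.

(** * An isolated extreme candidate moves inwards *)

Section IsolatedLeftmost.

Variables (c : R) (m : nat) (x : nat -> R) (i b : nat).
Hypotheses (Hc : 0 <= c) (Hi : (i < m)%nat) (Hb : (b < m)%nat) (Hib : x i < x b)
  (Hnear : forall k, (k < m)%nat -> k <> i -> x b <= x k).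

Local Notation t := ((x i + x b) / 2).
Local Notation s := ((x i + 3 * x b) / 4).
Local Notation x' := (upd x i t).

Lemma isolated_closest_kept y : closest m x i y = true -> closest m x' i y = true.
Proof.
  rewrite closest_iff, closest_upd by auto. intros H k Hk Hki.
  pose proof (H b Hb). pose proof (Hnear k Hk Hki). unfold dist in *. split_Rabs; lra.
Qed.

Lemma isolated_closest_gained y : t < y < s ->
  closest m x' i y = true /\ closest m x i y = false.
Proof.
  intros Hy. split.
  - apply closest_upd; auto. intros k Hk Hki. pose proof (Hnear k Hk Hki). split_Rabs; lra.
  - destruct (closest m x i y) eqn:E; auto. rewrite closest_iff in E.
    specialize (E b Hb). unfold dist in E. split_Rabs; lra.
Qed.

Lemma isolated_farthest_kept y : farthest m x' i y = true -> farthest m x i y = true.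
Proof.
  rewrite farthest_upd, farthest_iff by auto. intros H k Hk.
  assert (Hbi : b <> i) by (intros ->; lra). pose proof (H b Hb Hbi).
  unfold dist. destruct (Nat.eq_dec k i) as [->|Hki]; [lra|].
  specialize (H k Hk Hki). split_Rabs; lra.
Qed.

Lemma isolated_score_gain y : ~ In y (midpoints m x ++ midpoints m x' ++ [t; s]) ->
  score c m x i y + ind t s y <= score c m x' i y.
Proof.
  rewrite !not_in_app_iff. intros [Hx [Hx' Hts]].
  assert (Halone : mult m x i = 1%nat).
  { apply mult_eq1; auto. intros k Hk Hki. pose proof (Hnear k Hk Hki). lra. }
  assert (Halone' : mult m x' i = 1%nat).
  { apply mult_upd_alone; auto. intros k Hk Hki. pose proof (Hnear k Hk Hki). lra. }
  rewrite !score_alone by auto.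
  pose proof (b2r_le _ _ (isolated_closest_kept y)).
  pose proof (Rmult_le_compat_l c _ _ Hc (b2r_le _ _ (isolated_farthest_kept y))).
  unfold ind. destruct (Rle_dec t y), (Rle_dec y s); try lra.
  assert (y <> t /\ y <> s) as [Hyt Hys] by (split; intros E; apply Hts; rewrite E; simpl; auto).
  destruct (isolated_closest_gained y) as [-> ->]; [lra|].
  pose proof (b2r_bounds (farthest m x i y)). simpl. lra.
Qed.

Lemma payoff_isolated_gain : 0 <= x i -> x b <= 1 ->
  payoff c m x i + (x b - x i) / 4 <= payoff c m x' i.
Proof.
  intros H0 H1.
  assert (Hs : ex_RInt (score c m x i) 0 1) by (apply ex_RInt_score; auto; lra).
  assert (Hs' : ex_RInt (score c m x' i) 0 1) by (apply ex_RInt_score; auto; lra).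
  assert (Hind : ex_RInt (ind t s) 0 1) by (apply ex_RInt_ind; lra).
  replace ((x b - x i) / 4) with (RInt (ind t s) 0 1) by (rewrite RInt_ind; lra).
  unfold payoff. rewrite <- (RInt_Rplus _ _ _ _ Hs Hind).
  apply (RInt_le_off_finite _ _ (midpoints m x ++ midpoints m x' ++ [t; s])); auto; try lra.
  - exact (ex_RInt_plus _ _ _ _ Hs Hind).
  - intros y _. apply isolated_score_gain.
Qed.

End IsolatedLeftmost.

Lemma isolated_leftmost_deviates c m x i : 0 <= c -> no_profitable_deviation c m x ->
  (i < m)%nat -> mult m x i = 1%nat -> (forall k, (k < m)%nat -> x i <= x k) ->
  (exists k, (k < m)%nat /\ x i < x k) -> False.
Proof.
  intros Hc [Hprof Hdev] Hi H1 Hmin [k [Hk Hik]].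
  destruct (nearest_above m x (x i) k Hk Hik) as [b [Hb [Hib Hnear]]].
  assert (Hnear' : forall k, (k < m)%nat -> k <> i -> x b <= x k).
  { intros j Hj Hji. apply Hnear; auto. pose proof (Hmin j Hj).
    assert (x j <> x i) by (intros E; pose proof (mult_ge2 m x i j Hi Hj Hji E); lia). lra. }
  pose proof (Hprof i Hi). pose proof (Hprof b Hb).
  pose proof (payoff_isolated_gain c m x i b Hc Hi Hb Hib Hnear' ltac:(lra) ltac:(lra)).
  pose proof (Hdev i ((x i + x b) / 2) Hi ltac:(lra)). lra.
Qed.

(** * A crowded position splits its voters *)

Section CrowdedPosition.

Variables (c : R) (m : nat) (x : nat -> R) (i k0 b : nat) (G d : R).
Hypotheses (Hc : 0 <= c) (Hi : (i < m)%nat) (Hk0 : (k0 < m)%nat) (Hk0i : k0 <> i)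
  (Hk0x : x k0 = x i) (Hb : (b < m)%nat) (Hib : x i < x b)
  (Hmax : forall k, (k < m)%nat -> x k <= x b)
  (Hgap : forall k, (k < m)%nat -> x k <> x i -> G <= Rabs (x k - x i))
  (Hd : 0 < d) (HdG : 2 * d < G).

Local Notation xr := (upd x i (x i + d)).
Local Notation xl := (upd x i (x i - d)).

Lemma crowded_gap k : (k < m)%nat -> x k = x i \/ x k <= x i - G \/ x i + G <= x k.
Proof.
  intros Hk. destruct (Req_dec (x k) (x i)) as [E|E]; [now left|right].
  pose proof (Hgap k Hk E). split_Rabs; lra.
Qed.

Lemma crowded_top_far : x i + G <= x b.
Proof. destruct (crowded_gap b Hb) as [|[|]]; lra. Qed.

Lemma crowded_shift_alone e : 0 < Rabs e < G -> mult m (upd x i (x i + e)) i = 1%nat.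
Proof.
  intros He. apply mult_upd_alone; auto. intros k Hk _ E.
  destruct (crowded_gap k Hk) as [|[|]]; split_Rabs; lra.
Qed.

Lemma xr_never_last y : farthest m xr i y = false.
Proof.
  pose proof crowded_top_far.
  apply (farthest_between m xr i k0 b y); auto.
  rewrite upd_same, !upd_other by (auto; intros ->; lra). lra.
Qed.

Lemma closest_right_shift y : closest m x i y = true -> x i + d / 2 < y ->
  closest m xr i y = true.
Proof. intros H Hy. apply closest_upd_closer; auto. split_Rabs; lra. Qed.

Lemma closest_left_shift y : closest m x i y = true -> y < x i - d / 2 ->
  closest m xl i y = true.
Proof. intros H Hy. apply closest_upd_closer; auto. split_Rabs; lra. Qed.

Lemma farthest_left_shift y : b2r (farthest m xl i y) <=
  b2r (farthest m x i y) + ind ((x i + x b - d) / 2) ((x i + x b) / 2) y.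
Proof.
  pose proof (b2r_bounds (farthest m x i y)). pose proof (ind_bounds ((x i + x b - d) / 2) ((x i + x b) / 2) y).
  destruct (farthest m xl i y) eqn:E; simpl; [|lra].
  destruct (classic (exists a, (a < m)%nat /\ x a < x i)) as [[a [Ha Hai]]|Hnone].
  - (* [i] at [x i - d] lies strictly between [a] and [b] *)
    exfalso. assert (a <> i) by (intros ->; lra).
    destruct (crowded_gap a Ha) as [|[|]]; try lra.
    rewrite (farthest_between m xl i a b y) in E; try discriminate; auto.
    rewrite upd_same, !upd_other by (auto; intros ->; lra). lra.
  - assert (Hleft : forall k, (k < m)%nat -> x i <= x k).
    { intros k Hk. apply Rnot_lt_le. intros Hk'. apply Hnone. eauto. }
    rewrite farthest_upd in E by auto.
    assert (Hbi : b <> i) by (intros ->; lra).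
    pose proof (E b Hb Hbi).
    destruct (Rlt_dec (2 * y) (x i + x b)).
    + unfold ind. repeat destruct Rle_dec; split_Rabs; lra.
    + replace (farthest m x i y) with true; [simpl; lra|]. symmetry. apply farthest_iff.
      intros k Hk. pose proof (Hleft k Hk). pose proof (Hmax k Hk). unfold dist. split_Rabs; lra.
Qed.

Lemma payoff_xr_lower : 0 <= x i -> x b <= 1 -> G / 2 - d / 2 <= payoff c m xr i.
Proof.
  intros H0 H1. pose proof crowded_top_far.
  assert (Hxr : mult m xr i = 1%nat) by (apply crowded_shift_alone; split_Rabs; lra).
  replace (G / 2 - d / 2) with (RInt (ind (x i + d / 2) (x i + G / 2)) 0 1)
    by (rewrite RInt_ind; lra).
  apply (RInt_le_off_finite _ _ (midpoints m xr ++ [x i + d / 2; x i + G / 2])).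
  { lra. }
  { apply ex_RInt_ind; lra. }
  { apply ex_RInt_score; auto; lra. }
  intros y _. rewrite not_in_app_iff. intros [Hy Hends].
  rewrite score_alone, xr_never_last by auto.
  unfold ind. destruct (Rle_dec (x i + d / 2) y), (Rle_dec y (x i + G / 2));
    try (pose proof (b2r_bounds (closest m xr i y)); simpl; lra).
  assert (y <> x i + d / 2 /\ y <> x i + G / 2) as [Hy1 Hy2]
    by (split; intros E; apply Hends; rewrite E; simpl; auto).
  replace (closest m xr i y) with true; [simpl; lra|]. symmetry.
  apply closest_upd; auto. intros k Hk _.
  destruct (crowded_gap k Hk) as [->|[|]]; split_Rabs; lra.
Qed.

Lemma crowded_score_interior y :
  ~ In y (midpoints m x ++ midpoints m xr ++ midpoints m xl) ->
  INR (mult m x i) * score c m x i y <=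
  (score c m xr i y + score c m xl i y) +
  (ind (x i - d / 2) (x i + d / 2) y + c * ind ((x i + x b - d) / 2) ((x i + x b) / 2) y).
Proof.
  rewrite !not_in_app_iff. intros [Hx [Hxr Hxl]].
  rewrite mult_score_off_midpoints by auto.
  rewrite !score_alone, xr_never_last by (auto; apply crowded_shift_alone; split_Rabs; lra).
  assert (Hfirst : b2r (closest m x i y) <= b2r (closest m xr i y) + b2r (closest m xl i y)
                   + ind (x i - d / 2) (x i + d / 2) y).
  { pose proof (b2r_bounds (closest m xr i y)). pose proof (b2r_bounds (closest m xl i y)).
    pose proof (ind_bounds (x i - d / 2) (x i + d / 2) y).
    destruct (closest m x i y) eqn:E; simpl; [|lra].
    destruct (Rlt_dec (x i + d / 2) y); [rewrite closest_right_shift; simpl; auto; lra|].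
    destruct (Rlt_dec y (x i - d / 2)); [rewrite closest_left_shift; simpl; auto; lra|].
    unfold ind. repeat destruct Rle_dec; lra. }
  pose proof (Rmult_le_compat_l c _ _ Hc (farthest_left_shift y)). simpl. lra.
Qed.

Lemma crowded_score_boundary y : x i = 0 -> 0 < y ->
  ~ In y (midpoints m x ++ midpoints m xr) ->
  INR (mult m x i) * score c m x i y <= score c m xr i y + ind (x i - d / 2) (x i + d / 2) y.
Proof.
  intros H0 Hy. rewrite not_in_app_iff. intros [Hx Hxr].
  rewrite mult_score_off_midpoints by auto.
  rewrite score_alone, xr_never_last by (auto; apply crowded_shift_alone; split_Rabs; lra).
  pose proof (Rmult_le_pos c _ Hc (proj1 (b2r_bounds (farthest m x i y)))).
  pose proof (b2r_bounds (closest m xr i y)).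
  destruct (closest m x i y) eqn:E; simpl; [|pose proof (ind_bounds (x i - d / 2) (x i + d / 2) y); lra].
  destruct (Rlt_dec (x i + d / 2) y); [rewrite closest_right_shift; simpl; auto|];
    unfold ind; repeat destruct Rle_dec; lra.
Qed.

Lemma payoff_crowded_interior :
  INR (mult m x i) * payoff c m x i <= payoff c m xr i + payoff c m xl i + (1 + c / 2) * d.
Proof.
  set (a1 := x i - d / 2). set (b1 := x i + d / 2).
  set (a2 := (x i + x b - d) / 2). set (b2 := (x i + x b) / 2).
  assert (Hx : ex_RInt (score c m x i) 0 1) by (apply ex_RInt_score; auto; lra).
  assert (Hr : ex_RInt (score c m xr i) 0 1) by (apply ex_RInt_score; auto; lra).
  assert (Hl : ex_RInt (score c m xl i) 0 1) by (apply ex_RInt_score; auto; lra).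
  assert (H1 : ex_RInt (ind a1 b1) 0 1) by (apply ex_RInt_ind; lra).
  assert (H2 : ex_RInt (ind a2 b2) 0 1) by (apply ex_RInt_ind; lra).
  assert (J1 : RInt (ind a1 b1) 0 1 <= d) by (eapply Rle_trans; [apply RInt_ind_le|]; unfold a1, b1; lra).
  assert (J2 : RInt (ind a2 b2) 0 1 <= d / 2) by (eapply Rle_trans; [apply RInt_ind_le|]; unfold a2, b2; lra).
  assert (Hrl := ex_RInt_plus _ _ _ _ Hr Hl).
  assert (H2c : ex_RInt (fun y => c * ind a2 b2 y) 0 1) by exact (ex_RInt_scal _ _ _ c H2).
  assert (H12 := ex_RInt_plus _ _ _ _ H1 H2c).
  assert (Hle := RInt_le_off_finite
    (fun y => INR (mult m x i) * score c m x i y)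
    (fun y => (score c m xr i y + score c m xl i y) + (ind a1 b1 y + c * ind a2 b2 y))
    (midpoints m x ++ midpoints m xr ++ midpoints m xl) 0 1 ltac:(lra)
    (ex_RInt_scal _ _ _ _ Hx) (ex_RInt_plus _ _ _ _ Hrl H12)
    (fun y _ => crowded_score_interior y)).
  rewrite RInt_Rmult, (RInt_Rplus (fun y => _ + _) (fun y => _ + _)), !RInt_Rplus, RInt_Rmult in Hle;
    auto.
  unfold payoff. pose proof (Rmult_le_compat_l c _ _ Hc J2). lra.
Qed.

Lemma payoff_crowded_boundary : x i = 0 ->
  INR (mult m x i) * payoff c m x i <= payoff c m xr i + d.
Proof.
  intros H0. set (a1 := x i - d / 2). set (b1 := x i + d / 2).
  assert (Hx : ex_RInt (score c m x i) 0 1) by (apply ex_RInt_score; auto; lra).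
  assert (Hr : ex_RInt (score c m xr i) 0 1) by (apply ex_RInt_score; auto; lra).
  assert (H1 : ex_RInt (ind a1 b1) 0 1) by (apply ex_RInt_ind; lra).
  assert (J1 : RInt (ind a1 b1) 0 1 <= d) by (eapply Rle_trans; [apply RInt_ind_le|]; unfold a1, b1; lra).
  assert (Hle := RInt_le_off_finite
    (fun y => INR (mult m x i) * score c m x i y)
    (fun y => score c m xr i y + ind a1 b1 y)
    (midpoints m x ++ midpoints m xr) 0 1 ltac:(lra)
    (ex_RInt_scal _ _ _ _ Hx) (ex_RInt_plus _ _ _ _ Hr H1)
    (fun y Hy => crowded_score_boundary y H0 (proj1 Hy))).
  rewrite RInt_Rmult, RInt_Rplus in Hle; auto.
  unfold payoff. lra.
Qed.

End CrowdedPosition.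

Lemma small_step_ex c G p : 0 <= c -> 0 < G -> exists d, 0 < d /\ (4 + 2 * c) * d <= G /\ (0 < p -> d <= p).
Proof.
  intros Hc HG.
  set (M := if Rlt_dec 0 p then Rmin G p else G).
  assert (HM : 0 < M /\ M <= G /\ (0 < p -> M <= p)).
  { unfold M. destruct Rlt_dec; [|repeat split; auto; lra].
    repeat split; [apply Rmin_pos; auto | apply Rmin_l | intros; apply Rmin_r]. }
  exists (M / (4 + 2 * c)). repeat split.
  - apply Rdiv_lt_0_compat; lra.
  - replace ((4 + 2 * c) * (M / (4 + 2 * c))) with M by (field; lra). lra.
  - intros Hp. apply Rle_trans with M; [|tauto].
    unfold Rdiv. rewrite <- (Rmult_1_r M) at 2. apply Rmult_le_compat_l; [lra|].
    rewrite <- Rinv_1. apply Rinv_le_contravar; lra.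
Qed.

Lemma crowded_position_deviates c m x i : 0 <= c -> no_profitable_deviation c m x ->
  (i < m)%nat -> (3 <= mult m x i)%nat -> (exists k, (k < m)%nat /\ x i < x k) -> False.
Proof.
  intros Hc [Hprof Hdev] Hi H3 [k [Hk Hik]].
  destruct (mult_ge2_other m x i Hi ltac:(lia)) as [k0 [Hk0 [Hk0i Hk0x]]].
  destruct (argmax_ex m x ltac:(lia)) as [b [Hb Hmax]].
  assert (Hib : x i < x b) by (pose proof (Hmax k Hk); lra).
  destruct (gap_ex m x (x i)) as [G [HG Hgap]].
  assert (HGb : x i + G <= x b) by (pose proof (Hgap b Hb ltac:(lra)); split_Rabs; lra).
  destruct (small_step_ex c G (x i) Hc HG) as [d [Hd [HdG Hdp]]].
  assert (HdG2 : 2 * d < G) by nra.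
  pose proof (Hprof i Hi). pose proof (Hprof b Hb).
  assert (Hlow : G / 2 - d / 2 <= payoff c m (upd x i (x i + d)) i)
    by (apply (payoff_xr_lower c m x i k0 b G d); auto; lra).
  pose proof (Hdev i (x i + d) Hi ltac:(lra)) as Hright.
  assert (Hn : 3 <= INR (mult m x i)) by (replace 3 with (INR 3) by (simpl; lra); apply le_INR; lia).
  assert (Hpos : 0 < payoff c m x i) by lra.
  pose proof (Rmult_le_compat_r _ _ _ (Rlt_le _ _ Hpos) Hn).
  assert (0 <= c * d) by (apply Rmult_le_pos; lra).
  destruct (Rlt_dec 0 (x i)) as [Hp|Hp].
  - pose proof (Hdev i (x i - d) Hi ltac:(specialize (Hdp Hp); lra)) as Hleft.
    assert (Hup : INR (mult m x i) * payoff c m x i <=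
      payoff c m (upd x i (x i + d)) i + payoff c m (upd x i (x i - d)) i + (1 + c / 2) * d)
      by (apply (payoff_crowded_interior c m x i k0 b G d); auto).
    lra.
  - assert (Hup : INR (mult m x i) * payoff c m x i <= payoff c m (upd x i (x i + d)) i + d)
      by (apply (payoff_crowded_boundary c m x i k0 b G d); auto; lra).
    lra.
Qed.

Lemma nonconvergent_other m x j : nonconvergent m x -> exists k, (k < m)%nat /\ x k <> x j.
Proof.
  intros [j1 [k1 [Hj1 [Hk1 Hne]]]].
  destruct (Req_dec (x j1) (x j)) as [E|E]; [exists k1 | exists j1]; split; auto; congruence.
Qed.

Lemma nonconvergent_mirror m x : nonconvergent m x -> nonconvergent m (mirror x).
Proof.
  intros [j [k [Hj [Hk Hne]]]]. exists j, k. repeat split; auto. unfold mirror. lra.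
Qed.

Lemma mult_le_2 c m x j : 0 <= c -> no_profitable_deviation c m x -> nonconvergent m x ->
  (j < m)%nat -> (mult m x j <= 2)%nat.
Proof.
  intros Hc Hdev Hnc Hj. destruct (Nat.le_gt_cases (mult m x j) 2) as [|H3]; auto. exfalso.
  destruct (nonconvergent_other m x j Hnc) as [k [Hk Hkj]].
  destruct (Rlt_dec (x j) (x k)).
  - apply (crowded_position_deviates c m x j); eauto; lia.
  - apply (crowded_position_deviates c m (mirror x) j); auto.
    + apply no_profitable_deviation_mirror; auto.
    + rewrite mult_mirror. lia.
    + exists k. split; auto. unfold mirror. lra.
Qed.

Lemma leftmost_mult_2 c m x j : 0 <= c -> no_profitable_deviation c m x -> nonconvergent m x ->
  (j < m)%nat -> (forall k, (k < m)%nat -> x j <= x k) -> mult m x j = 2%nat.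
Proof.
  intros Hc Hdev Hnc Hj Hmin.
  pose proof (mult_le_2 c m x j Hc Hdev Hnc Hj). pose proof (mult_ge1 m x j Hj).
  destruct (Nat.eq_dec (mult m x j) 1) as [H1|]; [exfalso | lia].
  destruct (nonconvergent_other m x j Hnc) as [k [Hk Hkj]].
  apply (isolated_leftmost_deviates c m x j); auto.
  exists k. split; auto. pose proof (Hmin k Hk). lra.
Qed.

Theorem lemma4 (c : R) (m : nat) (x : nat -> R) :
  0 <= c -> (2 <= m)%nat -> nash c m x -> nonconvergent m x ->
  (forall j, (j < m)%nat -> (mult m x j <= 2)%nat) /\
  (forall j, (j < m)%nat -> (forall k, (k < m)%nat -> x j <= x k) -> mult m x j = 2%nat) /\
  (forall j, (j < m)%nat -> (forall k, (k < m)%nat -> x k <= x j) -> mult m x j = 2%nat) /\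
  m <> 3%nat.
Proof.
  intros Hc Hm Hnash Hnc.
  pose proof (nash_no_profitable_deviation c m x Hnash) as Hdev.
  assert (Hright : forall j, (j < m)%nat -> (forall k, (k < m)%nat -> x k <= x j) ->
                   mult m x j = 2%nat).
  { intros j Hj Hmax. rewrite <- mult_mirror.
    apply (leftmost_mult_2 c); auto using no_profitable_deviation_mirror, nonconvergent_mirror.
    intros k Hk. specialize (Hmax k Hk). unfold mirror. lra. }
  split; [|split; [|split]]; eauto using mult_le_2, leftmost_mult_2.
  intros ->.
  destruct (argmin_ex 3 x ltac:(lia)) as [j0 [Hj0 Hmin]].
  destruct (argmax_ex 3 x ltac:(lia)) as [j1 [Hj1 Hmax]].
  assert (Hlt : x j0 <> x j1).
  { destruct (nonconvergent_other 3 x j0 Hnc) as [k [Hk Hkj]].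
    pose proof (Hmin k Hk). pose proof (Hmax k Hk). pose proof (Hmax j0 Hj0). lra. }
  pose proof (mult_add_le 3 x j0 j1 Hlt).
  rewrite (leftmost_mult_2 c 3 x j0), (Hright j1) in H; auto. lia.
Qed.
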